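(* Let $U_0, c_0, \rho_0 > 0$ be constants. Let $f_1, f_2, f_3, f_4 : \mathbb{R} \to \mathbb{R}$ be continuously differentiable functions and let $k_i, l_i, m_i$ ($i = 1,\dots,4$) be real numbers with $k_3 k_4 \neq 0$. Write $r_i = \sqrt{k_i^2 + l_i^2 + m_i^2}$ and $\xi_i = k_i x + l_i y + m_i z$. Define $$v_x'(x,y,z,t) = k_1 f_1[\xi_1 - (k_1 U_0 - c_0 r_1)t] + k_2 f_2[\xi_2 - (k_2 U_0 + c_0 r_2)t] + \tfrac{l_3}{k_3} f_3[\xi_3 - k_3 U_0 t] + \tfrac{m_4}{k_4} f_4[\xi_4 - k_4 U_0 t],$$ $$v_y'(x,y,z,t) = l_1 f_1[\xi_1 - (k_1 U_0 - c_0 r_1)t] + l_2 f_2[\xi_2 - (k_2 U_0 + c_0 r_2)t] - f_3[\xi_3 - k_3 U_0 t],$$ $$v_z'(x,y,z,t) = m_1 f_1[\xi_1 - (k_1 U_0 - c_0 r_1)t] + m_2 f_2[\xi_2 - (k_2 U_0 + c_0 r_2)t] - f_4[\xi_4 - k_4 U_0 t],$$ $$p'(x,y,z,t) = -c_0\rho_0 r_1 f_1[\xi_1 - (k_1 U_0 - c_0 r_1)t] + c_0 \rho_0 r_2 f_2[\xi_2 - (k_2 U_0 + c_0 r_2)t].$$ Then $(v_x', v_y', v_z', p')$ satisfies pointwise on $\mathbb{R}^3 \times \mathbb{R}$ the system $$\partial_t v_x' + U_0 \partial_x v_x' + \tfrac{1}{\rho_0}\partial_x p' = 0,\quad \partial_t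 v_y' + U_0 \partial_x v_y' + \tfrac{1}{\rho_0}\partial_y p' = 0,\quad \partial_t v_z' + U_0 \partial_x v_z' + \tfrac{1}{\rho_0}\partial_z p' = 0,$$ $$\partial_t p' + U_0 \partial_x p' + \rho_0 c_0^2(\partial_x v_x' + \partial_y v_y' + \partial_z v_z') = 0,$$ and the initial conditions $v_x'(x,y,z,0) = k_1 f_1(\xi_1) + k_2 f_2(\xi_2) + \frac{l_3}{k_3} f_3(\xi_3) + \frac{m_4}{k_4} f_4(\xi_4)$, $v_y'(x,y,z,0) = l_1 f_1(\xi_1) + l_2 f_2(\xi_2) - f_3(\xi_3)$, $v_z'(x,y,z,0) = m_1 f_1(\xi_1) + m_2 f_2(\xi_2) - f_4(\xi_4)$, $p'(x,y,z,0) = -c_0\rho_0 r_1 f_1(\xi_1) + c_0\rho_0 r_2 f_2(\xi_2)$.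
   Context: This system is the 3D Euler equations linearized at the uniform flow with velocity $(U_0,0,0)$, density $\rho_0$, pressure $p_0$, sound speed $c_0$. *)

From Stdlib Require Import Reals.
From Coquelicot Require Import Coquelicot.
Open Scope R_scope.

(* A scalar field on R^3 x R, arguments (x, y, z, t). *)
Definition field4 := R -> R -> R -> R -> R.

Definition is_C1 (f : R -> R) : Prop :=
  forall u, ex_derive f u /\ continuous (Derive f) u.

Definition d_x (F : field4) x y z t := Derive (fun s => F s y z t) x.
Definition d_y (F : field4) x y z t := Derive (fun s => F x s z t) y.
Definition d_z (F : field4) x y z t := Derive (fun s => F x y s t) z.
Definition d_t (F : field4) x y z t := Derive (fun s => F x y z s) t.

Definition has_partials (F : field4) : Prop :=
  forall x y z t,
    ex_derive (fun s => F s y z t) x /\ ex_derive (fun s => F x s z t) y /\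
    ex_derive (fun s => F x y s t) z /\ ex_derive (fun s => F x y z s) t.

Definition rr (k l m : R) : R := sqrt (k ^ 2 + l ^ 2 + m ^ 2).
Definition xi (k l m x y z : R) : R := k * x + l * y + m * z.

Definition w1 (U0 c0 rho0 : R) (f1 f2 f3 f4 : R -> R) (k1 l1 m1 k2 l2 m2 k3 l3 m3 k4 l4 m4 : R) x y z t := f1 (xi k1 l1 m1 x y z - (k1 * U0 - c0 * rr k1 l1 m1) * t).
Definition w2 (U0 c0 rho0 : R) (f1 f2 f3 f4 : R -> R) (k1 l1 m1 k2 l2 m2 k3 l3 m3 k4 l4 m4 : R) x y z t := f2 (xi k2 l2 m2 x y z - (k2 * U0 + c0 * rr k2 l2 m2) * t).
Definition w3 (U0 c0 rho0 : R) (f1 f2 f3 f4 : R -> R) (k1 l1 m1 k2 l2 m2 k3 l3 m3 k4 l4 m4 : R) x y z t := f3 (xi k3 l3 m3 x y z - k3 * U0 * t).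
Definition w4 (U0 c0 rho0 : R) (f1 f2 f3 f4 : R -> R) (k1 l1 m1 k2 l2 m2 k3 l3 m3 k4 l4 m4 : R) x y z t := f4 (xi k4 l4 m4 x y z - k4 * U0 * t).

Definition vx (U0 c0 rho0 : R) (f1 f2 f3 f4 : R -> R) (k1 l1 m1 k2 l2 m2 k3 l3 m3 k4 l4 m4 : R) : field4 := fun x y z t =>
  k1 * w1 U0 c0 rho0 f1 f2 f3 f4 k1 l1 m1 k2 l2 m2 k3 l3 m3 k4 l4 m4 x y z t + k2 * w2 U0 c0 rho0 f1 f2 f3 f4 k1 l1 m1 k2 l2 m2 k3 l3 m3 k4 l4 m4 x y z t
  + l3 / k3 * w3 U0 c0 rho0 f1 f2 f3 f4 k1 l1 m1 k2 l2 m2 k3 l3 m3 k4 l4 m4 x y z t + m4 / k4 * w4 U0 c0 rho0 f1 f2 f3 f4 k1 l1 m1 k2 l2 m2 k3 l3 m3 k4 l4 m4 x y z t.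
Definition vy (U0 c0 rho0 : R) (f1 f2 f3 f4 : R -> R) (k1 l1 m1 k2 l2 m2 k3 l3 m3 k4 l4 m4 : R) : field4 := fun x y z t =>
  l1 * w1 U0 c0 rho0 f1 f2 f3 f4 k1 l1 m1 k2 l2 m2 k3 l3 m3 k4 l4 m4 x y z t + l2 * w2 U0 c0 rho0 f1 f2 f3 f4 k1 l1 m1 k2 l2 m2 k3 l3 m3 k4 l4 m4 x y z t - w3 U0 c0 rho0 f1 f2 f3 f4 k1 l1 m1 k2 l2 m2 k3 l3 m3 k4 l4 m4 x y z t.
Definition vz (U0 c0 rho0 : R) (f1 f2 f3 f4 : R -> R) (k1 l1 m1 k2 l2 m2 k3 l3 m3 k4 l4 m4 : R) : field4 := fun x y z t =>
  m1 * w1 U0 c0 rho0 f1 f2 f3 f4 k1 l1 m1 k2 l2 m2 k3 l3 m3 k4 l4 m4 x y z t + m2 * w2 U0 c0 rho0 f1 f2 f3 f4 k1 l1 m1 k2 l2 m2 k3 l3 m3 k4 l4 m4 x y z t - w4 U0 c0 rho0 f1 f2 f3 f4 k1 l1 m1 k2 l2 m2 k3 l3 m3 k4 l4 m4 x y z t.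
Definition pp (U0 c0 rho0 : R) (f1 f2 f3 f4 : R -> R) (k1 l1 m1 k2 l2 m2 k3 l3 m3 k4 l4 m4 : R) : field4 := fun x y z t =>
  - c0 * rho0 * rr k1 l1 m1 * w1 U0 c0 rho0 f1 f2 f3 f4 k1 l1 m1 k2 l2 m2 k3 l3 m3 k4 l4 m4 x y z t + c0 * rho0 * rr k2 l2 m2 * w2 U0 c0 rho0 f1 f2 f3 f4 k1 l1 m1 k2 l2 m2 k3 l3 m3 k4 l4 m4 x y z t.

(* The system is linear with constant coefficients, so the four terms can be
   treated separately and added.  A plane wave [a f(k x + l y + m z - w t)] with
   amplitudes [a = (a_x, a_y, a_z, a_p)] solves it as soon as
   [(U0 k - w) a_v + a_p (k, l, m) / rho0 = 0] and
   [(U0 k - w) a_p + rho0 c0^2 (k a_x + l a_y + m a_z) = 0].  The first two terms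
   are acoustic waves: [w = U0 k -+ c0 r], [a_v = (k, l, m)] and
   [a_p = rho0 (w - U0 k)], where the dispersion relation [(w - U0 k)^2 = c0^2 r^2]
   closes the second equation.  The last two are vortical waves: [w = U0 k], [a_v]
   orthogonal to [(k, l, m)] and [a_p = 0]. *)
From Stdlib Require Import Reals Lra FunctionalExtensionality.
From Coquelicot Require Import Coquelicot.
Open Scope R_scope.

Definition euler_solution (U0 c0 rho0 : R) (Vx Vy Vz P : field4) : Prop :=
  (has_partials Vx /\ has_partials Vy /\ has_partials Vz /\ has_partials P) /\
  (forall x y z t,
     d_t Vx x y z t + U0 * d_x Vx x y z t + / rho0 * d_x P x y z t = 0 /\
     d_t Vy x y z t + U0 * d_x Vy x y z t + / rho0 * d_y P x y z t = 0 /\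
     d_t Vz x y z t + U0 * d_x Vz x y z t + / rho0 * d_z P x y z t = 0 /\
     d_t P x y z t + U0 * d_x P x y z t
       + rho0 * c0 ^ 2 * (d_x Vx x y z t + d_y Vy x y z t + d_z Vz x y z t) = 0).

Lemma field4_ext (F G : field4) : (forall x y z t, F x y z t = G x y z t) -> F = G.
Proof.
  intros H; extensionality x; extensionality y; extensionality z; extensionality t.
  apply H.
Qed.

Lemma euler_solution_ext (U0 c0 rho0 : R) (Vx Vy Vz P Vx' Vy' Vz' P' : field4) :
  (forall x y z t, Vx x y z t = Vx' x y z t) -> (forall x y z t, Vy x y z t = Vy' x y z t) ->
  (forall x y z t, Vz x y z t = Vz' x y z t) -> (forall x y z t, P x y z t = P' x y z t) ->
  euler_solution U0 c0 rho0 Vx' Vy' Vz' P' -> euler_solution U0 c0 rho0 Vx Vy Vz P.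
Proof.
  intros Ex Ey Ez Ep.
  now rewrite (field4_ext _ _ Ex), (field4_ext _ _ Ey), (field4_ext _ _ Ez), (field4_ext _ _ Ep).
Qed.

Definition plane_wave (f : R -> R) (k l m w : R) : field4 :=
  fun x y z t => f (xi k l m x y z - w * t).

Definition euler_mode (U0 c0 rho0 k l m w ax ay az ap : R) : Prop :=
  (U0 * k - w) * ax + / rho0 * (k * ap) = 0 /\
  (U0 * k - w) * ay + / rho0 * (l * ap) = 0 /\
  (U0 * k - w) * az + / rho0 * (m * ap) = 0 /\
  (U0 * k - w) * ap + rho0 * c0 ^ 2 * (k * ax + l * ay + m * az) = 0.

Lemma rr_sqr (k l m : R) : rr k l m ^ 2 = k ^ 2 + l ^ 2 + m ^ 2.
Proof. apply pow2_sqrt; nra. Qed.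

Lemma acoustic_mode (U0 c0 rho0 k l m w : R) :
  rho0 <> 0 -> (w - k * U0) ^ 2 = c0 ^ 2 * (k ^ 2 + l ^ 2 + m ^ 2) ->
  euler_mode U0 c0 rho0 k l m w k l m (rho0 * (w - k * U0)).
Proof.
  intros Hrho Hdisp; split; [| split; [| split]]; try (field; assumption).
  transitivity (rho0 * (c0 ^ 2 * (k ^ 2 + l ^ 2 + m ^ 2) - (w - k * U0) ^ 2)).
  - ring.
  - rewrite Hdisp; ring.
Qed.

Lemma vortical_mode (U0 c0 rho0 k l m ax ay az : R) :
  k * ax + l * ay + m * az = 0 ->
  euler_mode U0 c0 rho0 k l m (k * U0) ax ay az 0.
Proof. intros Hdiv; split; [| split; [| split]]; rewrite ?Hdiv; ring. Qed.

Lemma is_C1_ex_derive (f : R -> R) : is_C1 f -> forall u, ex_derive f u.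
Proof. intros Hf u; apply Hf. Qed.

Lemma is_derive_comp_affine (f g : R -> R) (c s : R) :
  ex_derive f (g s) -> (forall u, g u = g s + c * (u - s)) ->
  is_derive (fun u => f (g u)) s (c * Derive f (g s)).
Proof.
  intros Hf Hg.
  apply (is_derive_comp f g); [now apply Derive_correct |].
  apply is_derive_ext with (f := fun u => g s + c * (u - s)); [easy |].
  auto_derive; [easy | ring].
Qed.

Section PlaneWave.

Variables (f : R -> R) (k l m w : R).
Hypothesis f_derivable : forall u, ex_derive f u.

Lemma plane_wave_partials (x y z t : R) :
  let D := Derive f (xi k l m x y z - w * t) in
  is_derive (fun s : R => plane_wave f k l m w s y z t) x (k * D) /\
  is_derive (fun s : R => plane_wave f k l m w x s z t) y (l * D) /\
  is_derive (fun s : R => plane_wave f k l m w x y s t) z (m * D) /\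
  is_derive (fun s : R => plane_wave f k l m w x y z s) t (- w * D).
Proof.
  unfold plane_wave, xi; split; [| split; [| split]].
  - apply (is_derive_comp_affine f (fun s => k * s + l * y + m * z - w * t));
      [apply f_derivable | intro u; cbv beta; ring].
  - apply (is_derive_comp_affine f (fun s => k * x + l * s + m * z - w * t));
      [apply f_derivable | intro u; cbv beta; ring].
  - apply (is_derive_comp_affine f (fun s => k * x + l * y + m * s - w * t));
      [apply f_derivable | intro u; cbv beta; ring].
  - apply (is_derive_comp_affine f (fun s => k * x + l * y + m * z - w * s));
      [apply f_derivable | intro u; cbv beta; ring].
Qed.

Lemma has_partials_plane_wave (a : R) :
  has_partials (fun x y z t => a * plane_wave f k l m w x y z t).
Proof.
  intros x y z t.
  destruct (plane_wave_partials x y z t) as (Dx & Dy & Dz & Dt).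
  split; [| split; [| split]]; apply ex_derive_scal; eexists; eassumption.
Qed.

Lemma euler_solution_plane_wave (U0 c0 rho0 ax ay az ap : R) :
  euler_mode U0 c0 rho0 k l m w ax ay az ap ->
  euler_solution U0 c0 rho0
    (fun x y z t => ax * plane_wave f k l m w x y z t)
    (fun x y z t => ay * plane_wave f k l m w x y z t)
    (fun x y z t => az * plane_wave f k l m w x y z t)
    (fun x y z t => ap * plane_wave f k l m w x y z t).
Proof.
  intros (Ex & Ey & Ez & Ep); split.
  - split; [| split; [| split]]; apply has_partials_plane_wave.
  - intros x y z t.
    destruct (plane_wave_partials x y z t) as (Dx & Dy & Dz & Dt).
    unfold d_x, d_y, d_z, d_t; rewrite !Derive_scal.
    rewrite (is_derive_unique _ _ _ Dx), (is_derive_unique _ _ _ Dy),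
      (is_derive_unique _ _ _ Dz), (is_derive_unique (plane_wave f k l m w x y z) _ _ Dt).
    set (D := Derive f _).
    split; [| split; [| split]].
    + transitivity (((U0 * k - w) * ax + / rho0 * (k * ap)) * D); [ring | rewrite Ex; ring].
    + transitivity (((U0 * k - w) * ay + / rho0 * (l * ap)) * D); [ring | rewrite Ey; ring].
    + transitivity (((U0 * k - w) * az + / rho0 * (m * ap)) * D); [ring | rewrite Ez; ring].
    + transitivity (((U0 * k - w) * ap + rho0 * c0 ^ 2 * (k * ax + l * ay + m * az)) * D);
        [ring | rewrite Ep; ring].
Qed.

End PlaneWave.

Lemma has_partials_plus (F G : field4) :
  has_partials F -> has_partials G ->
  has_partials (fun x y z t => F x y z t + G x y z t).
Proof.
  intros HF HG x y z t.
  destruct (HF x y z t) as (Fx & Fy & Fz & Ft), (HG x y z t) as (Gx & Gy & Gz & Gt).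
  split; [| split; [| split]].
  - exact (ex_derive_plus (fun s => F s y z t) (fun s => G s y z t) x Fx Gx).
  - exact (ex_derive_plus (fun s => F x s z t) (fun s => G x s z t) y Fy Gy).
  - exact (ex_derive_plus (fun s => F x y s t) (fun s => G x y s t) z Fz Gz).
  - exact (ex_derive_plus (fun s => F x y z s) (fun s => G x y z s) t Ft Gt).
Qed.

Section Superposition.

Variables (F G : field4) (x y z t : R).
Hypotheses (HF : has_partials F) (HG : has_partials G).

Lemma d_x_plus :
  d_x (fun x' y' z' t' => F x' y' z' t' + G x' y' z' t') x y z t = d_x F x y z t + d_x G x y z t.
Proof.
  exact (Derive_plus (fun s => F s y z t) (fun s => G s y z t) x
    (proj1 (HF x y z t)) (proj1 (HG x y z t))).
Qed.

Lemma d_y_plus :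
  d_y (fun x' y' z' t' => F x' y' z' t' + G x' y' z' t') x y z t = d_y F x y z t + d_y G x y z t.
Proof.
  exact (Derive_plus (fun s => F x s z t) (fun s => G x s z t) y
    (proj1 (proj2 (HF x y z t))) (proj1 (proj2 (HG x y z t)))).
Qed.

Lemma d_z_plus :
  d_z (fun x' y' z' t' => F x' y' z' t' + G x' y' z' t') x y z t = d_z F x y z t + d_z G x y z t.
Proof.
  exact (Derive_plus (fun s => F x y s t) (fun s => G x y s t) z
    (proj1 (proj2 (proj2 (HF x y z t)))) (proj1 (proj2 (proj2 (HG x y z t))))).
Qed.

Lemma d_t_plus :
  d_t (fun x' y' z' t' => F x' y' z' t' + G x' y' z' t') x y z t = d_t F x y z t + d_t G x y z t.
Proof.
  exact (Derive_plus (fun s => F x y z s) (fun s => G x y z s) t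
    (proj2 (proj2 (proj2 (HF x y z t)))) (proj2 (proj2 (proj2 (HG x y z t))))).
Qed.

End Superposition.

Lemma euler_solution_plus (U0 c0 rho0 : R) (Ax Ay Az Ap Bx By Bz Bp : field4) :
  euler_solution U0 c0 rho0 Ax Ay Az Ap -> euler_solution U0 c0 rho0 Bx By Bz Bp ->
  euler_solution U0 c0 rho0
    (fun x y z t => Ax x y z t + Bx x y z t) (fun x y z t => Ay x y z t + By x y z t)
    (fun x y z t => Az x y z t + Bz x y z t) (fun x y z t => Ap x y z t + Bp x y z t).
Proof.
  intros [(HAx & HAy & HAz & HAp) EA] [(HBx & HBy & HBz & HBp) EB].
  split; [split; [| split; [| split]]; apply has_partials_plus; assumption |].
  intros x y z t.
  rewrite !d_x_plus, !d_y_plus, !d_z_plus, !d_t_plus by assumption.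
  destruct (EA x y z t) as (A1 & A2 & A3 & A4), (EB x y z t) as (B1 & B2 & B3 & B4).
  split; [| split; [| split]]; lra.
Qed.

Theorem proposition5 (U0 c0 rho0 : R) (f1 f2 f3 f4 : R -> R)
  (k1 l1 m1 k2 l2 m2 k3 l3 m3 k4 l4 m4 : R) :
  0 < U0 -> 0 < c0 -> 0 < rho0 ->
  is_C1 f1 -> is_C1 f2 -> is_C1 f3 -> is_C1 f4 ->
  k3 * k4 <> 0 ->
  let Vx := vx U0 c0 rho0 f1 f2 f3 f4 k1 l1 m1 k2 l2 m2 k3 l3 m3 k4 l4 m4 in
  let Vy := vy U0 c0 rho0 f1 f2 f3 f4 k1 l1 m1 k2 l2 m2 k3 l3 m3 k4 l4 m4 in
  let Vz := vz U0 c0 rho0 f1 f2 f3 f4 k1 l1 m1 k2 l2 m2 k3 l3 m3 k4 l4 m4 in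
  let P := pp U0 c0 rho0 f1 f2 f3 f4 k1 l1 m1 k2 l2 m2 k3 l3 m3 k4 l4 m4 in
  (has_partials Vx /\ has_partials Vy /\ has_partials Vz /\ has_partials P) /\
  (forall x y z t,
     d_t Vx x y z t + U0 * d_x Vx x y z t + / rho0 * d_x P x y z t = 0 /\
     d_t Vy x y z t + U0 * d_x Vy x y z t + / rho0 * d_y P x y z t = 0 /\
     d_t Vz x y z t + U0 * d_x Vz x y z t + / rho0 * d_z P x y z t = 0 /\
     d_t P x y z t + U0 * d_x P x y z t
       + rho0 * c0 ^ 2 * (d_x Vx x y z t + d_y Vy x y z t + d_z Vz x y z t) = 0) /\
  (forall x y z,
     Vx x y z 0 = k1 * f1 (xi k1 l1 m1 x y z) + k2 * f2 (xi k2 l2 m2 x y z)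
                  + l3 / k3 * f3 (xi k3 l3 m3 x y z) + m4 / k4 * f4 (xi k4 l4 m4 x y z) /\
     Vy x y z 0 = l1 * f1 (xi k1 l1 m1 x y z) + l2 * f2 (xi k2 l2 m2 x y z)
                  - f3 (xi k3 l3 m3 x y z) /\
     Vz x y z 0 = m1 * f1 (xi k1 l1 m1 x y z) + m2 * f2 (xi k2 l2 m2 x y z)
                  - f4 (xi k4 l4 m4 x y z) /\
     P x y z 0 = - c0 * rho0 * rr k1 l1 m1 * f1 (xi k1 l1 m1 x y z)
                 + c0 * rho0 * rr k2 l2 m2 * f2 (xi k2 l2 m2 x y z)).
Proof.
  intros _ _ Hrho C1 C2 C3 C4 Hk Vx Vy Vz P.
  destruct (Rmult_neq_0_reg _ _ Hk) as [Hk3 Hk4].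
  pose (om1 := k1 * U0 - c0 * rr k1 l1 m1); pose (om2 := k2 * U0 + c0 * rr k2 l2 m2).
  pose (W1 := plane_wave f1 k1 l1 m1 om1); pose (W2 := plane_wave f2 k2 l2 m2 om2).
  pose (W3 := plane_wave f3 k3 l3 m3 (k3 * U0)); pose (W4 := plane_wave f4 k4 l4 m4 (k4 * U0)).
  assert (Hwaves : euler_solution U0 c0 rho0
    (fun x y z t => k1 * W1 x y z t + k2 * W2 x y z t + l3 / k3 * W3 x y z t + m4 / k4 * W4 x y z t)
    (fun x y z t => l1 * W1 x y z t + l2 * W2 x y z t + -1 * W3 x y z t + 0 * W4 x y z t)
    (fun x y z t => m1 * W1 x y z t + m2 * W2 x y z t + 0 * W3 x y z t + -1 * W4 x y z t)
    (fun x y z t => rho0 * (om1 - k1 * U0) * W1 x y z t + rho0 * (om2 - k2 * U0) * W2 x y z t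
                    + 0 * W3 x y z t + 0 * W4 x y z t)).
  { apply euler_solution_plus; [apply euler_solution_plus; [apply euler_solution_plus |] |];
      apply euler_solution_plane_wave; try (apply is_C1_ex_derive; assumption).
    - apply acoustic_mode; [lra | unfold om1; rewrite <- rr_sqr; ring].
    - apply acoustic_mode; [lra | unfold om2; rewrite <- rr_sqr; ring].
    - apply vortical_mode; field; assumption.
    - apply vortical_mode; field; assumption. }
  assert (Hsol : euler_solution U0 c0 rho0 Vx Vy Vz P).
  { refine (euler_solution_ext _ _ _ _ _ _ _ _ _ _ _ _ _ _ _ Hwaves); intros x y z t;
      unfold Vx, Vy, Vz, P, vx, vy, vz, pp, w1, w2, w3, w4, W1, W2, W3, W4, om1, om2, plane_wave; ring. }
  destruct Hsol as [Hpartials Heqs]; split; [exact Hpartials | split; [exact Heqs |]].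
  intros x y z; unfold Vx, Vy, Vz, P, vx, vy, vz, pp, w1, w2, w3, w4.
  rewrite !Rmult_0_r, !Rminus_0_r; split; [| split; [| split]]; reflexivity.
Qed.
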